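(* Let $(U,d)$ be an asymmetric pseudometric space with $|U|=n$, $k$ an integer with $2\le k\le n$, and $R^*>0$ the optimal AMMD value. Then the algorithm $\mathrm{BAC}(U,d,k)$ (described in the context) is a $\frac{1}{6k}$-approximation for AMMD: it returns a set $S\subseteq U$ with $|S|=k$ and $\operatorname{div}(S)\ge \frac{R^*}{6k}$.
   Context: An asymmetric pseudometric space $(U,d)$ is a finite set $U$ with $d:U\times U\to\mathbb{R}_{\ge 0}$ such that $d(u,u)=0$ and $d(u,v)\le d(u,w)+d(w,v)$ for all $u,v,w\in U$ ($d$ need not be symmetric). For $S\subseteq U$, $\operatorname{div}(S)=\min_{u,v\in S,\,u\ne v} d(u,v)$; AMMD asks for $O\subseteq U$, $|O|=k$, maximizing $\operatorname{div}(O)$, with maximum value $R^*$. $d_{\min}(u,v)=\min\{d(u,v),d(v,u)\}$, $d_{\max}(u,v)=\max\{d(u,v),d(v,u)\}$. Cluster$(U,d,R)$ (for $R>0$): initially all points are unmarked; while an unmarked point exists, choose any unmarked point $c$, let $A=\{v \text{ unmarked}: d_{\max}(c,v)<R\}$, mark all points of $A$, and add $c$ to the output set $U'$. Return $U'$. Extract$(W,d,\sigma,k)$ (for $W\subseteq U$, $\sigma>0$): build the digraph $G$ on $W$ with an arc $ij$ ($i\ne j$) iff $d(i,j)<\sigma$. If $G$ contains a directed cycle, let $C$ be a chordless directed cycle of $G$ (no arcs of $G$ between non-consecutive vertices of the cycle). Let $G_c$ be the condensation of $G$ (vertices are strongly connected components), $M$ a maximum antichain of $G_c$ (a maximum set of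 pairwise mutually unreachable vertices), and $L$ a path in $G_c$ with $2k-1$ arcs that is a shortest path between its endpoints, or, if none exists, a longest path among shortest paths found in $G_c$; $|C|,|L|$ denote numbers of vertices. If $C$ exists, $|C|\ge 2|M|-1$ and $|C|\ge|L|$, let $I$ be the vertices of $C=(v_1,\dots,v_\ell)$ with odd indices; else if $2|M|-1\ge|L|$, let $I$ consist of one point of $G$ from each component in $M$; else let $I$ consist of one point of $G$ from each component on $L$ with odd index. If $|I|\ge k$, output $k$ points greedily selected from $I$ (repeatedly adding a point of $I$ maximizing the $d_{\min}$-distance to the already selected points); otherwise return nothing. BAC$(U,d,k)$: for every $R\in\{d(i,j)>0: i,j\in U, i\ne j\}$, compute $U'=$ Cluster$(U,d,R)$ and call Extract$(U',d,R/(2k),k)$; return the set with the largest $\operatorname{div}$ among all sets returned by Extract. *)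

From HB Require Import structures.
From mathcomp Require Import all_boot all_order all_algebra.
Set Implicit Arguments. Unset Strict Implicit. Unset Printing Implicit Defensive.
Import Order.TTheory GRing.Theory Num.Theory.
Local Open Scope ring_scope.

Section AMMD.
Variables (R : realFieldType) (T : finType) (d : T -> T -> R).

Definition asym_pseudometric : Prop :=
  [/\ forall u v, 0 <= d u v, forall u, d u u = 0 &
      forall u v w, d u v <= d u w + d w v].

Definition dmin (u v : T) : R := Num.min (d u v) (d v u).
Definition dmax (u v : T) : R := Num.max (d u v) (d v u).

(* default value (max of all distances, >= 0); for |S| >= 2, div S is exactly
   the minimum of d u v over ordered pairs of distinct points of S. *)
Definition dtop : R := \big[Num.max/0]_(p : T * T) d p.1 p.2.

Definition div (S : {set T}) : R :=
  \big[Num.min/dtop]_(p : T * T | (p.1 \in S) && (p.2 \in S) && (p.1 != p.2))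
     d p.1 p.2.

(* optimal AMMD value R^* : max of div O over |O| = k (div >= 0, so the
   default 0 is harmless as soon as k <= |U|) *)
Definition ammd_opt (k : nat) : R :=
  \big[Num.max/0]_(O : {set T} | #|O| == k) div O.

(* cluster_run r marked U' : starting with the set of marked points [marked],
   the loop can terminate having added exactly the centers U'. *)
Inductive cluster_run (r : R) : {set T} -> {set T} -> Prop :=
| cr_done (marked : {set T}) : marked = setT -> cluster_run r marked set0
| cr_step (marked : {set T}) (c : T) (U' : {set T}) :
    c \notin marked ->
    cluster_run r (marked :|: [set v | (v \notin marked) && (dmax c v < r)]) U' ->
    cluster_run r marked (c |: U').

Definition cluster_out (r : R) (U' : {set T}) : Prop := cluster_run r set0 U'.

Section Extract.
Variables (W : {set T}) (sigma : R) (k : nat).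

Definition arc : rel T :=
  fun i j => [&& i \in W, j \in W, i != j & d i j < sigma].

Definition reach (x y : T) : bool := connect arc x y.

Definition scc (x : T) : {set T} := [set y in W | reach x y && reach y x].

Definition is_comp (A : {set T}) : bool := [exists x in W, A == scc x].

Definition gc_arc : rel {set T} :=
  fun A B => [&& is_comp A, is_comp B, A != B &
              [exists x in A, exists y in B, arc x y]].

Definition dcycle (c : seq T) : bool :=
  [&& (1 < size c)%N, uniq c, all (fun x => x \in W) c & cycle arc c].

Definition chordless (c : seq T) : Prop :=
  forall (x0 : T) i j, (i < size c)%N -> (j < size c)%N ->
    arc (nth x0 c i) (nth x0 c j) -> j = (i.+1 %% size c)%N.

Definition antichain (M : {set {set T}}) : Prop :=
  (forall A, A \in M -> is_comp A) /\
  (forall A B, A \in M -> B \in M -> A != B ->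
     forall x y, x \in A -> y \in B -> ~~ reach x y).

Definition max_antichain (M : {set {set T}}) : Prop :=
  antichain M /\ forall M', antichain M' -> (#|M'| <= #|M|)%N.

(* a path a0 -> ps of G_c (its number of arcs is size ps), shortest between
   its endpoints *)
Definition gc_path (a0 : {set T}) (ps : seq {set T}) : bool :=
  is_comp a0 && path gc_arc a0 ps.

Definition shortest_gc_path (a0 : {set T}) (ps : seq {set T}) : Prop :=
  gc_path a0 ps /\
  forall qs, gc_path a0 qs -> last a0 qs = last a0 ps -> (size ps <= size qs)%N.

Definition L_choice (a0 : {set T}) (ps : seq {set T}) : Prop :=
  shortest_gc_path a0 ps /\
  (size ps = (2 * k)%N.-1 \/
   ((forall b0 qs, shortest_gc_path b0 qs -> size qs <> (2 * k)%N.-1) /\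
    (forall b0 qs, shortest_gc_path b0 qs -> (size qs <= size ps)%N))).

Definition one_point_each (F : seq {set T}) (I : {set T}) : Prop :=
  (forall x, x \in I -> exists2 A, A \in F & x \in A) /\
  (forall A, A \in F -> #|I :&: A| = 1%N).

(* items of a sequence with odd 1-based index (= even 0-based index) *)
Definition odd_index (X : Type) (s : seq X) : seq X :=
  mask [seq ~~ odd i | i <- iota 0 (size s)] s.

(* the set I selected by Extract, for some admissible choice of the chordless
   cycle C (when G has a directed cycle), the maximum antichain M, the path L
   and the representatives *)
Definition I_choice (I : {set T}) : Prop :=
  exists (M : {set {set T}}) (a0 : {set T}) (ps : seq {set T})
         (copt : option (seq T)),
  [/\ max_antichain M, L_choice a0 ps,
      (copt = None <-> ~ exists c, dcycle c),
      (forall c, copt = Some c -> dcycle c /\ chordless c) &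
  let sizeL := (size ps).+1 in
  let sizeM2 := (2 * #|M|)%N.-1 in
  let useC := exists c, [/\ copt = Some c, (sizeM2 <= size c)%N & (sizeL <= size c)%N] in
     (exists c, [/\ copt = Some c, (sizeM2 <= size c)%N, (sizeL <= size c)%N &
                    I = [set x in odd_index c]])
  \/ [/\ ~ useC, (sizeL <= sizeM2)%N & one_point_each (enum M) I]
  \/ [/\ ~ useC, (sizeM2 < sizeL)%N & one_point_each (odd_index (a0 :: ps)) I]].

Definition dist_to (y : T) (p : seq T) : R :=
  foldr (fun z acc => Num.min (dmin y z) acc) (dmin y (head y p)) p.

Definition greedy (I : {set T}) (s : seq T) : Prop :=
  [/\ size s = k, uniq s, (forall x, x \in s -> x \in I) &
      forall (x0 : T) j, (0 < j < k)%N ->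
        forall y, y \in I -> y \notin take j s ->
          dist_to y (take j s) <= dist_to (nth x0 s j) (take j s)].

(* extract_res o : o is a possible result of Extract(W,d,sigma,k)
   (None = "returns nothing") *)
Definition extract_res (o : option {set T}) : Prop :=
  exists I, I_choice I /\
    (if (k <= #|I|)%N then exists s, greedy I s /\ o = Some [set x in s]
     else o = None).
End Extract.

Definition bac_res (k : nat) (o : option {set T}) : Prop :=
  exists (Uc : R -> {set T}) (out : R -> option {set T}),
  [/\ (forall i j, i != j -> 0 < d i j ->
         cluster_out (d i j) (Uc (d i j)) /\
         extract_res (Uc (d i j)) (d i j / (2 * k)%N%:R) k (out (d i j))),
      (o = None <-> forall i j, i != j -> 0 < d i j -> out (d i j) = None) &
      (forall S, o = Some S ->
         exists i j, [/\ i != j, 0 < d i j, out (d i j) = Some S &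
           forall i' j' S', i' != j' -> 0 < d i' j' -> out (d i' j') = Some S' ->
             div S' <= div S])].
End AMMD.

From Pilot Require Import Defs.
From HB Require Import structures.
From mathcomp Require Import all_boot all_order all_algebra zify lra.
From mathcomp Require Import boolp.
Set Implicit Arguments. Unset Strict Implicit. Unset Printing Implicit Defensive.
Import Order.TTheory GRing.Theory Num.Theory.
Local Open Scope ring_scope.

(* Let O attain the optimum R* and let Rb be the least distance that is at
   least R*/3; BAC tries the radius Rb.  Cluster(U, d, Rb) returns centers at
   pairwise d_max-distance at least Rb, and every point lies at d_max-distance
   less than Rb, hence less than R*/3, from some center.  So distinct points
   of O get distinct centers, at distance at least R*/3 from each other, hence
   at least Rb = 2k sigma with sigma = Rb/(2k).
   In the digraph of arcs shorter than sigma a walk of m arcs spans a distance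
   less than m sigma.  Hence every directed cycle has at least 2k+2 vertices,
   and in the acyclic case either two of these k centers are joined by a path,
   so that shortest paths with 2k-1 arcs exist in the condensation, or the k
   centers form an antichain.  In every branch of Extract the set I thus has
   at least k points, and no arc joins two of them (chordless cycle, shortest
   path, antichain), except the closing arc of an odd cycle, whose two ends
   the greedy selection cannot both pick when |I| > k.  The output therefore
   has div at least sigma >= R*/(6k). *)

Lemma exists_maxn (P : nat -> Prop) (b n0 : nat) :
  (forall n, P n -> (n <= b)%N) -> P n0 ->
  exists n, P n /\ forall m, P m -> (m <= n)%N.
Proof.
move=> Pb Pn0; have exP : exists n, `[< P n >] by exists n0; apply/asboolP.
have ubP n : `[< P n >] -> (n <= b)%N by move/asboolP; apply: Pb.
case: (ex_maxnP exP ubP) => n /asboolP Pn maxn.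
by exists n; split=> // m Pm; apply/maxn/asboolP.
Qed.

Lemma exists_minn (P : nat -> Prop) (n0 : nat) :
  P n0 -> exists n, P n /\ forall m, P m -> (n <= m)%N.
Proof.
move=> Pn0; have exP : exists n, `[< P n >] by exists n0; apply/asboolP.
case: (ex_minnP exP) => n /asboolP Pn minn.
by exists n; split=> // m Pm; apply/minn/asboolP.
Qed.

Section ArgExtremum.
Variables (R : realFieldType) (X : finType) (P : X -> Prop) (f : X -> R).

Lemma exists_arg_max x0 : P x0 -> exists x, P x /\ forall y, P y -> f y <= f x.
Proof.
move=> /asboolP Px0.
case: (@arg_maxP _ _ _ x0 (fun x => `[< P x >]) f Px0) => x /asboolP Px maxx.
by exists x; split=> // y /asboolP; apply: maxx.
Qed.

Lemma exists_arg_min x0 : P x0 -> exists x, P x /\ forall y, P y -> f x <= f y.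
Proof.
move=> /asboolP Px0.
case: (@arg_minP _ _ _ x0 (fun x => `[< P x >]) f Px0) => x /asboolP Px minx.
by exists x; split=> // y /asboolP; apply: minx.
Qed.

End ArgExtremum.

Section Distances.
Variables (R : realFieldType) (T : finType) (d : T -> T -> R).

Definition separated (sigma : R) (S : {set T}) : Prop :=
  forall x y, x \in S -> y \in S -> x != y -> sigma <= d x y.

Definition separated_but (sigma : R) (S : {set T}) (a b : T) : Prop :=
  forall x y, x \in S -> y \in S -> x != y -> (x, y) != (a, b) -> sigma <= d x y.

Lemma dmaxC u v : dmax d u v = dmax d v u.
Proof. by rewrite /dmax maxC. Qed.

Lemma le_dmaxl u v : d u v <= dmax d u v.
Proof. by rewrite le_max lexx. Qed.

Lemma le_dmaxr u v : d v u <= dmax d u v.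
Proof. by rewrite le_max lexx orbT. Qed.

Lemma dmin_lel u v : dmin d u v <= d u v.
Proof. by rewrite ge_min lexx. Qed.

Lemma dmin_ler u v : dmin d u v <= d v u.
Proof. by rewrite ge_min lexx orbT. Qed.

Lemma le_dmin z u v : z <= d u v -> z <= d v u -> z <= dmin d u v.
Proof. by move=> h1 h2; rewrite le_min h1 h2. Qed.

Lemma div_le_dist (S : {set T}) u v :
  u \in S -> v \in S -> u != v -> div d S <= d u v.
Proof.
move=> uS vS uv; rewrite /div (bigD1 (u, v)) /= ?uS ?vS ?uv //.
by rewrite ge_min lexx.
Qed.

Lemma separated_div sigma (S : {set T}) :
  (1 < #|S|)%N -> separated sigma S -> sigma <= div d S.
Proof.
case/card_gt1P => [u [v [uS vS uv]]] sepS.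
have sig_top : sigma <= dtop d.
  apply: le_trans (sepS u v uS vS uv) _.
  by rewrite /dtop (bigD1 (u, v)) //= le_max lexx.
apply: le_bigmin => // [[x y]] /= /andP[/andP[xS yS] xy]; exact: sepS.
Qed.

Lemma ammd_opt_attained k : 0 < ammd_opt d k ->
  exists O : {set T}, #|O| = k /\ div d O = ammd_opt d k.
Proof.
pose Q (x : R) := x = 0 \/ exists2 O : {set T}, #|O| = k & x = div d O.
have : Q (ammd_opt d k).
  apply: (big_ind Q); first by left.
    by move=> x y Qx Qy; rewrite /Num.max /Order.max; case: ifP.
  by move=> O /eqP kO; right; exists O.
by case=> [-> | [O kO ->]]; [rewrite ltxx | exists O].
Qed.

End Distances.

Section Cluster.
Variables (R : realFieldType) (T : finType) (d : T -> T -> R).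
Hypothesis d_refl : forall u, d u u = 0.

Lemma dmaxxx u : dmax d u u = 0.
Proof. by rewrite /dmax d_refl maxxx. Qed.

Lemma cluster_run_exists r marked : 0 < r -> exists U', cluster_run d r marked U'.
Proof.
move=> r_gt0; move: {2}#|~: marked| (leqnn #|~: marked|) => n.
elim: n marked => [|n IHn] marked unmarked_n.
  have /cards0_eq no_unmarked : #|~: marked| = 0%N by apply/eqP; rewrite -leqn0.
  by exists set0; apply: cr_done; rewrite -[marked]setCK no_unmarked setC0.
have [-> | ] := eqVneq marked setT; first by exists set0; apply: cr_done.
rewrite -subTset => /subsetPn[c _ c_unmarked].
pose marked' := marked :|: [set v | (v \notin marked) && (dmax d c v < r)].
have c_marked' : c \in marked' by rewrite !inE c_unmarked dmaxxx r_gt0 orbT.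
have /IHn[U' run'] : (#|~: marked'| <= n)%N.
  rewrite -ltnS; apply: leq_trans unmarked_n; apply: proper_card.
  apply/properP; split; first by rewrite setCS subsetUl.
  by exists c; rewrite inE ?c_unmarked ?c_marked'.
by exists (c |: U'); apply: cr_step.
Qed.

Lemma cluster_run_spec r marked U' : cluster_run d r marked U' ->
  [/\ forall v, v \notin marked -> exists2 c, c \in U' & dmax d c v < r,
      forall c, c \in U' -> c \notin marked &
      forall c c', c \in U' -> c' \in U' -> c != c' -> r <= dmax d c c'].
Proof.
elim=> {marked U'} [marked -> | marked c U' c_unmarked _ [cover fresh sep]].
  by split=> [v | c | c c']; rewrite inE.
have far_c c' : c' \in U' -> r <= dmax d c c'.
  move/fresh; rewrite !inE negb_or => /andP[c'_unmarked].
  by rewrite c'_unmarked /= -leNgt dmaxC.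
split.
- move=> v v_unmarked; have [cv | cv] := ltP (dmax d c v) r.
    by exists c; rewrite ?setU11.
  have [|c' c'U' c'v] := cover v; first by rewrite !inE negb_or v_unmarked ltNge cv.
  by exists c'; rewrite // inE c'U' orbT.
- move=> c'; rewrite !inE => /orP[/eqP -> // | /fresh].
  by rewrite !inE negb_or => /andP[].
- move=> x y; rewrite !inE => /orP[/eqP -> | xU'] /orP[/eqP -> | yU'] xy.
  + by rewrite eqxx in xy.
  + exact: far_c.
  + by rewrite dmaxC; apply: far_c.
  + exact: sep.
Qed.

Lemma cluster_out_cover r U' v : cluster_out d r U' -> exists2 c, c \in U' & dmax d c v < r.
Proof. by case/cluster_run_spec => cover _ _; apply: cover; rewrite inE. Qed.

Lemma cluster_out_sep r U' c c' : cluster_out d r U' ->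
  c \in U' -> c' \in U' -> c != c' -> r <= dmax d c c'.
Proof. by case/cluster_run_spec => _ _; apply. Qed.

End Cluster.

Lemma last_take (X : Type) (x : X) (p : seq X) i :
  (i <= size p)%N -> last x (take i p) = nth x (x :: p) i.
Proof.
elim: p x i => [|y p IHp] x [|i] //= le_ip.
by rewrite IHp // (set_nth_default x).
Qed.

Lemma nth_rot (X : Type) (x0 : X) (s : seq X) i j :
  (i < size s)%N -> (j <= size s)%N ->
  nth x0 (rot j s) ((i + size s - j) %% size s) = nth x0 s i.
Proof.
move=> lt_is le_js; rewrite /rot nth_cat size_drop.
have [le_ji | lt_ij] := leqP j i.
  have -> : ((i + size s - j) %% size s = i - j)%N.
    by rewrite -addnBAC // modnDr modn_small //; lia.
  have -> : (i - j < size s - j)%N by lia.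
  by rewrite nth_drop subnKC.
rewrite modn_small; last by lia.
have -> : (i + size s - j < size s - j)%N = false by lia.
by rewrite nth_take; [congr nth; lia | lia].
Qed.

Lemma path_drop_last (X : Type) (e : rel X) x p n :
  path e x p -> path e (last x (take n p)) (drop n p).
Proof. by rewrite -{1}(cat_take_drop n p) cat_path => /andP[]. Qed.

Section PathShortening.
Variables (X : eqType) (e : rel X).

Lemma path_nonuniq_shorter x p : path e x p -> ~~ uniq (x :: p) ->
  exists p', [/\ path e x p', last x p' = last x p & (size p' < size p)%N].
Proof.
elim: p x => [|y p IHp] x //= /andP[exy ep]; rewrite negb_and negbK.
case/orP=> [x_yp | /(IHp y ep)[p' [ep' lastp' ltp']]]; last first.
  by exists (y :: p'); split; rewrite /= ?exy.
have : path e x (y :: p) by rewrite /= exy.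
rewrite -[last y p]/(last x (y :: p)) -[(size p).+1]/(size (y :: p)).
case/splitPr: x_yp => p1 p2; rewrite cat_path /= => /and3P[_ _ ep2].
exists p2; split; rewrite ?last_cat //.
by rewrite size_cat /= addnS ltnS leq_addl.
Qed.

Lemma path_nonuniq_closed x p : path e x p -> ~~ uniq (x :: p) ->
  exists z q, [/\ path e z q, last z q = z, (0 < size q)%N & (size q <= size p)%N].
Proof.
elim: p x => [|y p IHp] x //= /andP[exy ep]; rewrite negb_and negbK.
case/orP=> [x_yp | /(IHp y ep)[z [q [eq lastq q_gt0 leqp]]]]; last first.
  by exists z, q; split=> //; apply: leqW.
have : path e x (y :: p) by rewrite /= exy.
rewrite -[(size p).+1]/(size (y :: p)).
case/splitPr: x_yp => p1 p2; rewrite cat_path /= => /and3P[ep1 ex _].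
exists x, (rcons p1 x); rewrite rcons_path ep1 ex last_rcons size_rcons.
by split=> //; rewrite size_cat /= addnS ltnS leq_addr.
Qed.

End PathShortening.

Section Digraph.
Variables (R : realFieldType) (T : finType) (d : T -> T -> R).
Variables (W : {set T}) (sigma : R).

Local Notation arc := (Defs.arc d W sigma).
Local Notation reach := (Defs.reach d W sigma).
Local Notation scc := (Defs.scc d W sigma).
Local Notation is_comp := (Defs.is_comp d W sigma).
Local Notation gc_arc := (Defs.gc_arc d W sigma).

Lemma arc_mem x y : arc x y -> (x \in W) /\ (y \in W).
Proof. by case/and4P. Qed.

Lemma arcxx x : arc x x = false.
Proof. by rewrite /Defs.arc eqxx !andbF. Qed.

Lemma le_dist_noarc x y :
  x \in W -> y \in W -> x != y -> ~~ arc x y -> sigma <= d x y.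
Proof. by move=> xW yW xy; rewrite /Defs.arc xW yW xy /= -leNgt. Qed.

Lemma path_arc_mem x p : path arc x p -> all (mem W) p.
Proof.
by elim: p x => [|y p IHp] x //= /andP[/arc_mem[_ ->] /IHp].
Qed.

Lemma mem_scc x y : (y \in scc x) = [&& y \in W, reach x y & reach y x].
Proof. by rewrite inE. Qed.

Lemma scc_id x : x \in W -> x \in scc x.
Proof. by move=> xW; rewrite mem_scc xW /Defs.reach connect0. Qed.

Lemma scc_eq x y : y \in scc x -> scc y = scc x.
Proof.
rewrite mem_scc => /and3P[_ xy yx]; apply/setP => z; rewrite !mem_scc.
case: (z \in W) => //=; apply/andP/andP => [[yz zy] | [xz zx]]; split.
- exact: connect_trans xy yz.
- exact: connect_trans zy yx.
- exact: connect_trans yx xz.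
- exact: connect_trans zx xy.
Qed.

Lemma is_compP A : reflect (exists2 x, x \in W & A = scc x) (is_comp A).
Proof.
apply: (iffP existsP) => [[x /andP[xW /eqP ->]] | [x xW ->]]; first by exists x.
by exists x; rewrite xW eqxx.
Qed.

Lemma comp_subW A x : is_comp A -> x \in A -> x \in W.
Proof. by case/is_compP => y _ ->; rewrite mem_scc => /andP[]. Qed.

Lemma comp_scc A x : is_comp A -> x \in A -> A = scc x.
Proof. by case/is_compP => y _ -> /scc_eq. Qed.

Lemma comp_eq A B x : is_comp A -> is_comp B -> x \in A -> x \in B -> A = B.
Proof. by move=> cA cB xA xB; rewrite (comp_scc cA xA) (comp_scc cB xB). Qed.

Lemma comp_reach A x y : is_comp A -> x \in A -> y \in A -> reach x y.
Proof. by move=> cA xA; rewrite (comp_scc cA xA) mem_scc => /and3P[]. Qed.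

Lemma comp_neq0 A : is_comp A -> A != set0.
Proof. by case/is_compP => x xW ->; apply/set0Pn; exists x; apply: scc_id. Qed.

Lemma gc_arc_reach A B x y : gc_arc A B -> x \in A -> y \in B -> reach x y.
Proof.
case/and4P=> cA cB _ /existsP[x' /andP[x'A /existsP[y' /andP[y'B x'y']]]] xA yB.
apply: connect_trans (comp_reach cA xA x'A) _.
exact: connect_trans (connect1 x'y') (comp_reach cB y'B yB).
Qed.

(* Transitive thanks to [B != set0]; it contains [gc_arc] since components
   are nonempty. *)
Definition reach_all (A B : {set T}) : bool :=
  (B != set0) && [forall x in A, forall y in B, reach x y].

Lemma reach_all_trans : transitive reach_all.
Proof.
move=> B A C /andP[/set0Pn[y yB] /'forall_implyP AB] /andP[C0 /'forall_implyP BC].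
rewrite /reach_all C0; apply/'forall_implyP => x xA; apply/'forall_implyP => z zC.
move: (AB x xA) (BC y yB) => /'forall_implyP/(_ y yB) xy /'forall_implyP/(_ z zC).
exact: connect_trans.
Qed.

Lemma gc_arc_reach_all A B : gc_arc A B -> reach_all A B.
Proof.
move=> AB; have /and4P[_ cB _ _] := AB; rewrite /reach_all comp_neq0 //.
apply/'forall_implyP => x xA; apply/'forall_implyP => y yB.
exact: gc_arc_reach AB xA yB.
Qed.

Lemma gc_path_reach a0 ps i j x y :
  path gc_arc a0 ps -> (i < j)%N -> (j < size (a0 :: ps))%N ->
  x \in nth a0 (a0 :: ps) i -> y \in nth a0 (a0 :: ps) j -> reach x y.
Proof.
move=> gp lt_ij lt_j xi yj.
have sorted_ps : sorted reach_all (a0 :: ps) by apply: sub_path gp; apply: gc_arc_reach_all.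
have := sorted_ltn_nth reach_all_trans a0 sorted_ps.
move=> /(_ i j); rewrite !inE => /(_ (ltn_trans lt_ij lt_j) lt_j lt_ij).
by case/andP=> _ /'forall_implyP/(_ x xi)/'forall_implyP/(_ y yj).
Qed.

Definition closed_walk x q : Prop :=
  [/\ path arc x q, last x q = x & (0 < size q)%N].

Lemma closed_walk_size x q : closed_walk x q -> (1 < size q)%N.
Proof.
case; case: q => [|y [|z q]] //= xy yx _.
by rewrite yx arcxx in xy.
Qed.

Lemma closed_walk_of_reach x y :
  x != y -> reach x y -> reach y x -> exists z q, closed_walk z q.
Proof.
move=> xy /connectP[p xp lastp] /connectP[q yq lastq].
exists x, (p ++ q); split.
- by rewrite cat_path xp -lastp yq.
- by rewrite last_cat -lastp -lastq.
- by case: p xp lastp {yq lastq} => [_ /= yx | //]; rewrite yx eqxx in xy.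
Qed.

Hypothesis tri : forall u v w, d u v <= d u w + d w v.

Lemma walk_dist_lt x p : path arc x p -> (0 < size p)%N ->
  d x (last x p) < (size p)%:R * sigma.
Proof.
elim: p x => [|y [|z p] IHp] x //= /andP[xy yp] _.
  by rewrite mul1r; case/and4P: xy.
apply: le_lt_trans (tri x _ y) _.
rewrite [(size p).+2%:R]mulrSr mulrDl mul1r [ltRHS]addrC ltrD //.
  by case/and4P: xy.
exact: IHp.
Qed.

End Digraph.

Section ChordlessCycle.
Variables (R : realFieldType) (T : finType) (d : T -> T -> R).
Variables (W : {set T}) (sigma : R).

Local Notation arc := (Defs.arc d W sigma).
Local Notation closed_walk := (closed_walk d W sigma).
Local Notation dcycle := (Defs.dcycle d W sigma).
Local Notation chordless := (Defs.chordless d W sigma).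

Definition shortest_closed_walk x q : Prop :=
  closed_walk x q /\ forall y q', closed_walk y q' -> (size q <= size q')%N.

Lemma shortest_closed_walk_exists :
  (exists x q, closed_walk x q) -> exists x q, shortest_closed_walk x q.
Proof.
case=> x [q xq]; pose P m := exists y q', closed_walk y q' /\ size q' = m.
have : P (size q) by exists x, q.
case/exists_minn=> _ [[y [q' [yq' <-]]] minq'].
by exists y, q'; split=> // z q'' zq''; apply: minq'; exists z, q''.
Qed.

Lemma closed_walk_in_cycle y r t : cycle arc (y :: r) -> (t < size (y :: r))%N ->
  arc (nth y (y :: r) t) y -> closed_walk y (rcons (take t r) y).
Proof.
rewrite /= rcons_path => /andP[yr _] lt_t ty; split.
- by rewrite rcons_path take_path //= last_take.
- by rewrite last_rcons.
- by rewrite size_rcons.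
Qed.

Lemma dcycle_closed_walk c : dcycle c -> exists x q, closed_walk x q.
Proof.
case/and4P; case: c => [|x p] // _ _ _ xp.
by exists x, (rcons p x); split; rewrite ?last_rcons ?size_rcons.
Qed.

Section Shortest.
Variables (x : T) (p : seq T).
Hypothesis shortest_xp : shortest_closed_walk x (rcons p x).

Lemma shortest_closed_walk_dcycle : dcycle (x :: p).
Proof.
have [[xpx _ _] minxp] := shortest_xp.
have := closed_walk_size shortest_xp.1; rewrite size_rcons => lt1p.
rewrite /Defs.dcycle [cycle _ _]xpx lt1p andbT /=; apply/andP; split.
  have xp : path arc x p by move: xpx; rewrite rcons_path => /andP[].
  apply/negPn/negP => /(path_nonuniq_closed xp)[z [q [zq lastq q_gt0 le_qp]]].
  by have := minxp z q (And3 zq lastq q_gt0); rewrite size_rcons ltnNge le_qp.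
by have := path_arc_mem xpx; rewrite all_rcons /= => /andP[-> ->].
Qed.

(* A chord from c_i to c_j closes, together with the cycle segment from c_j to
   c_i, a walk of ((i - j) mod n) + 1 arcs, so minimality forces j = i + 1. *)
Lemma shortest_closed_walk_chordless : chordless (x :: p).
Proof.
set c := x :: p => x0 i j lt_ic lt_jc cicj.
have [[xpx _ _] minxp] := shortest_xp.
have cyc_c : cycle arc c by [].
case erot : (rot j c) => [|y r].
  by move: lt_jc; rewrite -(size_rot j) erot.
have cj : y = nth x0 c j.
  by have := nth_rot x0 lt_jc (ltnW lt_jc); rewrite addKn modnn erot.
set t := ((i + size c - j) %% size c)%N.
have ci : nth y (y :: r) t = nth x0 c i.
  rewrite -(nth_rot x0 lt_ic (ltnW lt_jc)) -/t erot (set_nth_default x0) //.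
  by rewrite -erot size_rot ltn_mod.
have size_r : size r = (size c).-1.
  by rewrite -[r]/(behead (y :: r)) -erot size_behead size_rot.
have lt_t : (t < size (y :: r))%N by rewrite -erot size_rot ltn_mod.
have /minxp : closed_walk y (rcons (take t r) y).
  apply: closed_walk_in_cycle => //; first by rewrite -erot rot_cycle.
  by rewrite ci cj.
rewrite !size_rcons size_take size_r /= => le_ct.
have size_c : size c = (size p).+1 by [].
have : ((i + size c - j) %% size c = (size c).-1)%N.
  by move: le_ct lt_t; rewrite -/t /= size_r size_c; case: ifP; lia.
rewrite -size_c -subn1; have [le_ji | lt_ij] := leqP j i.
  rewrite -addnBAC // modnDr modn_small; last by lia.
  by move=> e; rewrite (_ : i.+1 = size c) ?modnn; lia.
by rewrite modn_small => [e|]; [rewrite modn_small | ]; lia.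
Qed.

End Shortest.

Lemma dcycle_chordless_exists :
  (exists x q, closed_walk x q) -> exists c, dcycle c /\ chordless c.
Proof.
case/shortest_closed_walk_exists => x [q shortest_xq].
have [[_ lastq q_gt0] _] := shortest_xq.
case/lastP: q shortest_xq lastq q_gt0 => [|p z] // + + _; rewrite last_rcons => shortest_xp zx.
rewrite zx in shortest_xp; exists (x :: p); split.
- exact: shortest_closed_walk_dcycle.
- exact: shortest_closed_walk_chordless.
Qed.

Hypothesis tri : forall u v w, d u v <= d u w + d w v.
Hypothesis sigma_gt0 : 0 < sigma.

Lemma dcycle_size_gt n c :
  (forall x y, x \in W -> y \in W -> x != y -> n%:R * sigma <= dmax d x y) ->
  dcycle c -> (n.+2 <= size c)%N.
Proof.
move=> sepW /and4P[size_c _ _].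
case: c size_c => [|x [|y p]] //= _ /andP[xy yp].
have [xW yW neq_xy dxy] : [/\ x \in W, y \in W, x != y & d x y < sigma].
  by case/and4P: xy.
have /walk_dist_lt : path arc y (rcons p x) by [].
rewrite size_rcons last_rcons => /(_ tri isT) dyx.
have dxy' : d x y < (size p).+1%:R * sigma.
  by apply: lt_le_trans dxy _; rewrite ler_pMl // ler1n.
have lt_max : dmax d x y < (size p).+1%:R * sigma by rewrite gt_max dxy' dyx.
have := le_lt_trans (sepW x y xW yW neq_xy) lt_max.
by rewrite ltr_pM2r // ltr_nat => ?; lia.
Qed.

End ChordlessCycle.

Lemma count_even_iota b n :
  count (fun i => ~~ odd i) (iota b n) = if odd b then n./2 else uphalf n.
Proof.
elim: n b => [|n IHn] b; first by case: (odd b).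
by rewrite /= IHn /=; case: (odd b); rewrite /= ?uphalfE ?add0n ?add1n.
Qed.

Lemma mem_mask_odd_iota (X : eqType) (x0 : X) b (s : seq X) y :
  y \in mask [seq ~~ odd i | i <- iota b (size s)] s ->
  exists2 i, (i < size s)%N & ~~ odd (b + i) /\ y = nth x0 s i.
Proof.
elim: s b => [|z s IHs] b //=.
have shift : y \in mask [seq ~~ odd i | i <- iota b.+1 (size s)] s ->
    exists2 i, (i < (size s).+1)%N & ~~ odd (b + i) /\ y = nth x0 (z :: s) i.
  by case/IHs => i lt_is [odd_i ->]; exists i.+1; rewrite ?addnS.
case: ifP => // even_b; rewrite inE => /orP[/eqP -> | /shift //].
by exists 0%N => //; rewrite addn0 even_b.
Qed.

Section OddIndex.
Variable X : eqType.

Lemma size_odd_index (s : seq X) : size (odd_index s) = uphalf (size s).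
Proof.
by rewrite /odd_index size_mask ?size_map ?size_iota // count_map count_even_iota.
Qed.

Lemma mem_odd_index (x0 : X) (s : seq X) y :
  y \in odd_index s -> exists2 i, (i < size s)%N & ~~ odd i /\ y = nth x0 s i.
Proof. exact: mem_mask_odd_iota. Qed.

Lemma odd_index_subset (s : seq X) : {subset odd_index s <= s}.
Proof. by move=> y; apply: mem_mask. Qed.

Lemma odd_index_uniq (s : seq X) : uniq s -> uniq (odd_index s).
Proof. by move=> uniq_s; rewrite /odd_index mask_uniq. Qed.

End OddIndex.

Section Greedy.
Variables (R : realFieldType) (T : finType) (d : T -> T -> R).

Lemma dist_to_le y p z : z \in p -> dist_to d y p <= dmin d y z.
Proof.
rewrite /dist_to; move: (dmin d y (head y p)) => e.
elim: p => //= t p IHp; rewrite inE ge_min => /predU1P[-> | /IHp ->].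
  by rewrite lexx.
by rewrite orbT.
Qed.

Lemma le_dist_to y p z : p != [::] -> (forall t, t \in p -> z <= dmin d y t) ->
  z <= dist_to d y p.
Proof.
move=> p_neq0 z_le; have : z <= dmin d y (head y p).
  by case: p p_neq0 z_le => // t p _ ->; rewrite ?mem_head.
rewrite /dist_to; move: (dmin d y (head y p)) => e z_e.
elim: p z_le {p_neq0} => //= t p IHp z_le.
by rewrite le_min z_le ?mem_head // IHp // => u up; rewrite z_le // inE up orbT.
Qed.

Lemma greedy_subset k I s : greedy d k I s -> {subset s <= I}.
Proof. by case. Qed.

Lemma card_greedy k I s : greedy d k I s -> #|[set x in s]| = k.
Proof. by case=> size_s uniq_s _ _; rewrite cardsE (card_uniqP uniq_s). Qed.

Lemma greedy_rcons n I s y : greedy d n I s ->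
  y \in I -> y \notin s ->
  (forall z, z \in I -> z \notin s -> dist_to d z s <= dist_to d y s) ->
  greedy d n.+1 I (rcons s y).
Proof.
case=> size_s uniq_s sI greedy_s yI ys ymax; split.
- by rewrite size_rcons size_s.
- by rewrite rcons_uniq ys uniq_s.
- by move=> x; rewrite mem_rcons inE => /predU1P[-> | /sI].
move=> x0 j /andP[j_gt0 lt_jn] z zI; rewrite -cats1 takel_cat ?size_s //.
rewrite nth_cat size_s; case: ltnP => [lt_js | le_sj].
  by apply: greedy_s; rewrite ?j_gt0.
have -> : j = n by lia.
by rewrite subnn -size_s take_size => /ymax; apply.
Qed.

Lemma greedy_exists k (I : {set T}) : (k <= #|I|)%N -> exists s, greedy d k I s.
Proof.
elim: k => [|k IHk] le_kI; first by exists [::]; split=> // x0 j /andP[? ?]; lia.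
have [s greedy_s] := IHk (ltnW le_kI).
have /subsetPn[y0 y0I] : ~~ (I \subset [set x in s]).
  apply: contraTN le_kI => /subset_leq_card le_Is; rewrite -leqNgt.
  apply: leq_trans le_Is _; rewrite cardsE (leq_trans (card_size s)) //.
  by case: greedy_s => ->.
rewrite inE => y0s.
have [y [[yI ys] ymax]] := exists_arg_max (P := fun y => y \in I /\ y \notin s)
  (fun y => dist_to d y s) (conj y0I y0s).
by exists (rcons s y); apply: greedy_rcons => // z zI zs; apply: ymax.
Qed.

(* As |I| > k, some z in I is neither v nor picked before v.  It is sigma-far
   from all earlier picks, and the greedy choice of v over z makes v at least
   as far from them, in particular from u. *)
Lemma greedy_close_pair k I s sigma u v : greedy d k I s -> (k < #|I|)%N ->
  u \in s -> v \in s -> (index u s < index v s)%N ->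
  (forall z t, z \in I -> t \in I -> z != u -> z != v -> t != z -> sigma <= dmin d z t) ->
  sigma <= dmin d v u.
Proof.
move=> greedy_s lt_kI us vs lt_uv far.
have [size_s _ sI greedy_step] := greedy_s.
set j := index v s in lt_uv.
have lt_jk : (j < k)%N by rewrite -size_s index_mem.
have sj : nth v s j = v by rewrite nth_index.
have u_pre : u \in take j s.
  by rewrite -(nth_index v us) -(nth_take v lt_uv) mem_nth // size_take index_mem vs.
have /subsetPn[z zI] : ~~ (I \subset v |: [set t in take j s]).
  apply: contraTN lt_kI => /subset_leq_card le_I; rewrite -leqNgt.
  apply: (leq_trans le_I); rewrite cardsU1 cardsE.
  apply: leq_trans (leq_add (leq_b1 _) (card_size _)) _.
  by rewrite size_takel; lia.
rewrite !inE negb_or => /andP[zv z_pre].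
have zu : z != u by apply: contraNneq z_pre => ->.
have step : dist_to d z (take j s) <= dist_to d v (take j s).
  rewrite -[X in _ <= dist_to d X _]sj; apply: greedy_step => //.
  by rewrite lt_jk andbT; apply: leq_ltn_trans lt_uv.
apply: le_trans (dist_to_le _ u_pre); apply: le_trans step.
apply: le_dist_to; first by apply: contraTneq u_pre => ->.
move=> t t_pre; apply: far => //; first exact/sI/(mem_take t_pre).
by apply: contraNneq z_pre => <-.
Qed.

Lemma greedy_separated_but k I s sigma a b : greedy d k I s -> (k < #|I|)%N ->
  separated_but d sigma I a b -> separated d sigma [set x in s].
Proof.
move=> greedy_s lt_kI sepI x y; rewrite !inE => xs ys xy.
have [xI yI] := (greedy_subset greedy_s xs, greedy_subset greedy_s ys).
have [[xa yb] | ] := eqVneq (x, y) (a, b); last exact: sepI.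
subst a b.
have far z t : z \in I -> t \in I -> z != x -> z != y -> t != z -> sigma <= dmin d z t.
  move=> zI tI zx zy tz; apply: le_dmin; apply: sepI => //.
  - by rewrite eq_sym.
  - by rewrite xpair_eqE (negbTE zx).
  - by rewrite xpair_eqE (negbTE zy) andbF.
have [lt_xy | lt_yx | eq_xy] := ltngtP (index x s) (index y s).
- by apply: le_trans (dmin_ler _ _ _); apply: greedy_close_pair greedy_s _ _ _ _ _.
- apply: le_trans (dmin_lel _ _ _); apply: greedy_close_pair greedy_s _ _ _ _ _ => //.
  by move=> z t zI tI zy zx; apply: far.
- by move: xy; rewrite -(nth_index x xs) eq_xy nth_index ?eqxx.
Qed.

End Greedy.

Section Representatives.
Variables (T : finType) (F : seq {set T}).
Hypothesis F_disjoint : forall A B x, A \in F -> B \in F -> x \in A -> x \in B -> A = B.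

Lemma one_point_each_eq I A x y : one_point_each F I ->
  A \in F -> x \in I -> y \in I -> x \in A -> y \in A -> x = y.
Proof.
case=> _ /(_ A) one_A AF xI yI xA yA; have /eqP/cards1P[z IA] := one_A AF.
have : x \in I :&: A by rewrite inE xI xA.
have : y \in I :&: A by rewrite inE yI yA.
by rewrite IA !inE => /eqP -> /eqP ->.
Qed.

Lemma one_point_each_card I : one_point_each F I -> (#|[set A in F]| <= #|I|)%N.
Proof.
case=> _ one_A; pose block x := odflt set0 [pick A in [set A in F] | x \in A].
apply: leq_trans (leq_imset_card block I); apply: subset_leq_card.
apply/subsetP => A; rewrite inE => AF.
have /card_gt0P[x] : (0 < #|I :&: A|)%N by rewrite one_A.
rewrite inE => /andP[xI xA]; apply/imsetP; exists x => //.
rewrite /block; case: pickP => [B /andP[] | /(_ A)]; last by rewrite inE AF xA.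
by rewrite inE => BF xB; apply: F_disjoint xA xB.
Qed.

Lemma one_point_each_exists :
  (forall A, A \in F -> A != set0) -> exists I, one_point_each F I.
Proof.
move=> F_neq0; exists [set x | [exists A in [set A in F], [pick y in A] == Some x]].
split=> [x | A AF]; rewrite ?inE.
  case/exists_inP=> A; rewrite inE => AF; case: pickP => // y yA /eqP[<-].
  by exists A.
have [a pickA] : exists a, [pick y in A] = Some a.
  case: pickP => [a _ | noA]; first by exists a.
  by case/set0Pn: (F_neq0 A AF) => x; rewrite noA.
have aA : a \in A by move: pickA; case: pickP => // y yA [<-].
apply/eqP/cards1P; exists a; apply/setP => y; rewrite !inE.
apply/andP/eqP => [[/exists_inP[B BF pickB] yA] | ->].
  rewrite inE in BF.
  have yB : y \in B by move: pickB; case: pickP => // b bB /eqP[<-].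
  by move: pickB; rewrite (F_disjoint BF AF yB yA) pickA => /eqP[].
by split=> //; apply/exists_inP; exists A; rewrite ?inE ?pickA.
Qed.

End Representatives.

Section CondensationPaths.
Variables (R : realFieldType) (T : finType) (d : T -> T -> R).
Variables (W : {set T}) (sigma : R).

Local Notation arc := (Defs.arc d W sigma).
Local Notation reach := (Defs.reach d W sigma).
Local Notation scc := (Defs.scc d W sigma).
Local Notation is_comp := (Defs.is_comp d W sigma).
Local Notation gc_arc := (Defs.gc_arc d W sigma).
Local Notation gc_path := (Defs.gc_path d W sigma).
Local Notation shortest := (Defs.shortest_gc_path d W sigma).
Local Notation closed_walk := (closed_walk d W sigma).

Lemma gc_path_comp a0 ps A : gc_path a0 ps -> A \in a0 :: ps -> is_comp A.
Proof.
case/andP; elim: ps a0 => [|B ps IHps] a0 ca0 /=; first by rewrite inE => _ /eqP ->.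
case/andP=> a0B Bps; rewrite inE => /predU1P[-> // | Aps].
by apply: IHps Bps Aps; case/and4P: a0B.
Qed.

Lemma shortest_gc_path_uniq a0 ps : shortest a0 ps -> uniq (a0 :: ps).
Proof.
case=> /andP[ca0 a0ps] minps; apply/negPn/negP.
move=> /(path_nonuniq_shorter a0ps)[ps' [a0ps' lastps' ltps']].
have := minps ps'; rewrite /Defs.gc_path ca0 a0ps' => /(_ isT lastps').
by rewrite leqNgt ltps'.
Qed.

Lemma shortest_gc_path_size a0 ps : shortest a0 ps -> (size ps < #|{set T}|)%N.
Proof.
move/shortest_gc_path_uniq/card_uniqP => card_ps.
by have := max_card (mem (a0 :: ps)); rewrite card_ps.
Qed.

Lemma shortest_gc_path_take a0 ps n : shortest a0 ps -> shortest a0 (take n ps).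
Proof.
case=> /andP[ca0 a0ps] minps; split; first by rewrite /Defs.gc_path ca0 take_path.
move=> qs /andP[_ a0qs] lastqs.
have := minps (qs ++ drop n ps); rewrite /Defs.gc_path ca0 cat_path a0qs lastqs.
rewrite path_drop_last // last_cat lastqs -last_cat cat_take_drop => /(_ isT erefl).
by rewrite size_cat size_drop size_take; case: ltnP; lia.
Qed.

Lemma shortest_gc_path_no_shortcut a0 ps i j : shortest a0 ps ->
  (i.+1 < j)%N -> (j <= size ps)%N ->
  ~~ gc_arc (nth a0 (a0 :: ps) i) (nth a0 (a0 :: ps) j).
Proof.
case=> /andP[ca0 a0ps] minps lt_ij le_j; apply/negP => shortcut.
have drop_j : drop j.-1 ps = nth a0 (a0 :: ps) j :: drop j ps.
  by case: j lt_ij le_j {shortcut} => // j _ le_j; rewrite /= (drop_nth a0).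
set qs := take i ps ++ drop j.-1 ps.
have last_i : last a0 (take i ps) = nth a0 (a0 :: ps) i by rewrite last_take //; lia.
have a0qs : path gc_arc a0 qs.
  rewrite cat_path take_path //= last_i drop_j /= shortcut -last_take //.
  exact: path_drop_last.
have lastqs : last a0 qs = last a0 ps.
  by rewrite -[in RHS](cat_take_drop j.-1 ps) !last_cat drop_j.
have := minps qs; rewrite /Defs.gc_path ca0 a0qs => /(_ isT lastqs).
by rewrite size_cat size_drop size_take; case: ltnP; lia.
Qed.

Section Acyclic.
Hypothesis acyclic : ~ exists x q, closed_walk x q.

Lemma acyclic_scc x : x \in W -> scc x = [set x].
Proof.
move=> xW; apply/setP => y; rewrite mem_scc inE.
have [-> | yx] := eqVneq y x; first by rewrite xW /Defs.reach connect0.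
apply/negP => /and3P[_ xy yx']; apply: acyclic.
by apply: closed_walk_of_reach xy yx'; rewrite eq_sym.
Qed.

Lemma acyclic_comp A : is_comp A -> exists2 x, x \in W & A = [set x].
Proof. by case/is_compP => x xW ->; exists x; rewrite ?acyclic_scc. Qed.

Lemma arc_gc_arc x y : arc x y -> gc_arc (scc x) (scc y).
Proof.
move=> xy; have [xW yW] := arc_mem xy.
apply/and4P; split.
- by apply/is_compP; exists x.
- by apply/is_compP; exists y.
- by rewrite !acyclic_scc // (inj_eq set1_inj); case/and4P: xy.
- by apply/existsP; exists x; rewrite scc_id //=; apply/existsP; exists y; rewrite scc_id.
Qed.

Lemma gc_path_of_path x p : x \in W -> path arc x p ->
  gc_path (scc x) [seq scc y | y <- p].
Proof.
move=> xW xp; apply/andP; split; first by apply/is_compP; exists x.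
elim: p x xW xp => [|y p IHp] x xW //= /andP[xy yp].
by rewrite arc_gc_arc // IHp // (arc_mem xy).2.
Qed.

Lemma path_of_gc_path a0 ps : gc_path a0 ps ->
  exists x p, [/\ a0 = [set x], path arc x p, size p = size ps & last a0 ps = [set last x p]].
Proof.
case/andP; elim: ps a0 => [|B ps IHps] a0 ca0 /=.
  by case: (acyclic_comp ca0) => x _ ->; exists x, [::].
case/andP=> a0B Bps; have /and4P[_ cB _ xy] := a0B.
have [y [p [By yp size_p lastp]]] := IHps B cB Bps.
have [x _ a0x] := acyclic_comp ca0; subst a0 B.
move: xy => /existsP[x' /andP[]]; rewrite inE => /eqP -> /existsP[y' /andP[]].
rewrite inE => /eqP -> xy; exists x, (y :: p).
by split; rewrite //= ?xy ?size_p.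
Qed.

End Acyclic.
End CondensationPaths.

Section ExtractCandidates.
Variables (R : realFieldType) (T : finType) (d : T -> T -> R).
Variables (W : {set T}) (sigma : R).

Local Notation reach := (Defs.reach d W sigma).
Local Notation scc := (Defs.scc d W sigma).
Local Notation is_comp := (Defs.is_comp d W sigma).
Local Notation shortest := (Defs.shortest_gc_path d W sigma).

(* Consecutive vertices of the cycle never both have odd index, except the
   last and the first when the length is odd. *)
Lemma odd_index_cycle_spec x0 c : dcycle d W sigma c -> chordless d W sigma c ->
  let I := [set x in odd_index c] in
  #|I| = uphalf (size c) /\ separated_but d sigma I (nth x0 c (size c).-1) (nth x0 c 0).
Proof.
move=> /and4P[_ uniq_c cW _] chordless_c I; split.
  by rewrite cardsE (card_uniqP (odd_index_uniq uniq_c)) size_odd_index.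
move=> x y; rewrite !inE => xI yI xy last_first.
have [xW yW] : x \in W /\ y \in W by split; apply: (allP cW); apply: odd_index_subset.
apply: (le_dist_noarc (W := W)) => //; apply/negP => x_y.
have [i lt_ic [even_i ex]] := mem_odd_index x0 xI.
have [j lt_jc [even_j ey]] := mem_odd_index x0 yI.
rewrite ex ey in x_y last_first.
have := chordless_c x0 i j lt_ic lt_jc x_y.
have [lt_i1 | le_ci1] := ltnP i.+1 (size c).
  by rewrite modn_small // => ji; move: even_j; rewrite ji /= even_i.
have ci : size c = i.+1 by apply/eqP; rewrite eqn_leq le_ci1 lt_ic.
by rewrite ci modnn => j0; move: last_first; rewrite j0 ci eqxx.
Qed.

Lemma antichain_disjoint M : antichain d W sigma M ->
  forall A B x, A \in enum M -> B \in enum M -> x \in A -> x \in B -> A = B.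
Proof.
case=> _ M_indep A B x; rewrite !mem_enum => AM BM xA xB; apply/eqP/negP => /negP AB.
by have := M_indep A B AM BM AB x x xA xB; rewrite /Defs.reach connect0.
Qed.

Lemma antichain_representatives_spec M I : antichain d W sigma M ->
  one_point_each (enum M) I -> separated d sigma I /\ (#|M| <= #|I|)%N.
Proof.
move=> antiM I_rep; have [M_comp M_indep] := antiM.
split; last first.
  have := one_point_each_card (antichain_disjoint antiM) I_rep.
  by have -> // : [set A in enum M] = M by apply/setP => A; rewrite inE mem_enum.
move=> x y xI yI xy.
have [A + xA] := I_rep.1 x xI; rewrite mem_enum => AM.
have [B + yB] := I_rep.1 y yI; rewrite mem_enum => BM.
have [eqAB | AB] := eqVneq A B.
  by subst B; rewrite (one_point_each_eq I_rep _ xI yI xA yB) ?mem_enum ?eqxx in xy.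
apply: (le_dist_noarc (W := W)) => //.
- exact: comp_subW (M_comp A AM) xA.
- exact: comp_subW (M_comp B BM) yB.
- by apply: contra (M_indep A B AM BM AB x y xA yB); apply: connect1.
Qed.

Lemma path_representatives_spec a0 ps I : shortest a0 ps ->
  one_point_each (odd_index (a0 :: ps)) I ->
  separated d sigma I /\ (uphalf (size ps).+1 <= #|I|)%N.
Proof.
move=> shortest_ps I_rep; have [gp _] := shortest_ps.
have compF A : A \in odd_index (a0 :: ps) -> is_comp A.
  by move/odd_index_subset; apply: gc_path_comp.
have disjF A B x : A \in odd_index (a0 :: ps) -> B \in odd_index (a0 :: ps) ->
    x \in A -> x \in B -> A = B.
  by move=> AF BF; apply: comp_eq; apply: compF.
split; last first.
  have := one_point_each_card disjF I_rep; rewrite cardsE.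
  by rewrite (card_uniqP (odd_index_uniq (shortest_gc_path_uniq shortest_ps))) size_odd_index.
move=> x y xI yI xy.
have [A AF xA] := I_rep.1 x xI; have [B BF yB] := I_rep.1 y yI.
have [xW yW] := (comp_subW (compF A AF) xA, comp_subW (compF B BF) yB).
have [eqAB | AB] := eqVneq A B.
  by subst B; rewrite (one_point_each_eq I_rep AF xI yI xA yB) eqxx in xy.
apply: (le_dist_noarc (W := W)) => //; apply/negP => x_y.
have [i lt_i [even_i Ai]] := mem_odd_index a0 AF.
have [j lt_j [even_j Bj]] := mem_odd_index a0 BF.
have [lt_ij | lt_ji | eq_ij] := ltngtP i j; last by move: AB; rewrite Ai Bj eq_ij eqxx.
- have lt_i1j : (i.+1 < j)%N.
    by rewrite ltn_neqAle lt_ij andbT; apply: contraNneq even_j => <-; rewrite /= even_i.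
  have := shortest_gc_path_no_shortcut shortest_ps lt_i1j lt_j; rewrite -Ai -Bj.
  apply/negP/negPn; apply/and4P; split; [exact: compF | exact: compF | done |].
  by apply/existsP; exists x; rewrite xA; apply/existsP; exists y; rewrite yB.
- have y_x : reach y x.
    by apply: gc_path_reach lt_ji lt_i _ _; rewrite -?Ai -?Bj //; case/andP: gp.
  have : y \in scc x by rewrite mem_scc yW y_x andbT; apply: connect1.
  rewrite -(comp_scc (compF A AF) xA) => yA.
  by move: AB; rewrite (disjF A B y AF BF yA yB) eqxx.
Qed.

End ExtractCandidates.

Lemma leq_uphalf m n : (2 * m <= n.+1)%N -> (m <= uphalf n)%N.
Proof. by rewrite mul2n => /half_leq; rewrite uphalfE doubleK. Qed.

Section ExtractCorrect.
Variables (R : realFieldType) (T : finType) (d : T -> T -> R).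
Variables (W : {set T}) (sigma : R) (k : nat).
Hypothesis tri : forall u v w, d u v <= d u w + d w v.
Hypothesis sigma_gt0 : 0 < sigma.
Hypothesis k_gt1 : (1 < k)%N.
Hypothesis W_sep : forall x y, x \in W -> y \in W -> x != y ->
  (2 * k)%N%:R * sigma <= dmax d x y.
Variable C : {set T}.
Hypotheses (C_sub : C \subset W) (card_C : #|C| = k).
Hypothesis C_sep : separated d ((2 * k)%N%:R * sigma) C.

Local Notation reach := (Defs.reach d W sigma).
Local Notation scc := (Defs.scc d W sigma).
Local Notation gc_path := (Defs.gc_path d W sigma).
Local Notation shortest := (Defs.shortest_gc_path d W sigma).
Local Notation closed_walk := (closed_walk d W sigma).

Section Acyclic.
Hypothesis acyclic : ~ exists x q, closed_walk x q.

Lemma acyclic_reach_L_size x y a0 ps : x \in C -> y \in C -> x != y -> reach x y ->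
  L_choice d W sigma k a0 ps -> size ps = (2 * k).-1.
Proof.
move=> xC yC xy /connectP[p xp ey] [_ [// | [no_2k _]]]; exfalso; subst y.
have [xW yW] := (subsetP C_sub x xC, subsetP C_sub _ yC).
pose P n :=
  exists qs, [/\ gc_path (scc x) qs, last (scc x) qs = scc (last x p) & size qs = n].
have : P (size [seq scc z | z <- p]).
  by exists [seq scc z | z <- p]; rewrite gc_path_of_path // last_map.
case/exists_minn=> _ [[qs [gp_qs last_qs <-]] min_qs].
have shortest_qs : shortest (scc x) qs.
  by split=> // qs' gp' last'; apply: min_qs; exists qs'; rewrite last' last_qs.
have [x' [p' [x'x x'p' size_p' last_p']]] := path_of_gc_path acyclic gp_qs.
move: x'x last_p'; rewrite last_qs !acyclic_scc // => /set1_inj xx' /set1_inj lastp'.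
subst x'.
have p'_gt0 : (0 < size p')%N.
  by case: p' {x'p' size_p'} lastp' => //= e; rewrite e eqxx in xy.
have := walk_dist_lt tri x'p' p'_gt0; rewrite -lastp' => /(le_lt_trans (C_sep xC yC xy)).
rewrite ltr_pM2r // ltr_nat size_p' => lt_2k_qs.
apply: (no_2k _ _ (shortest_gc_path_take (2 * k).-1 shortest_qs)).
by rewrite size_take; case: ifP; lia.
Qed.

Lemma acyclic_antichain_size M :
  ~ (exists x y, [/\ x \in C, y \in C, x != y & reach x y]) ->
  max_antichain d W sigma M -> (k <= #|M|)%N.
Proof.
move=> no_reach [_ maxM]; rewrite -card_C -(card_in_imset (f := scc)).
  apply: maxM; split=> [A /imsetP[x xC ->] | A B /imsetP[x xC ->] /imsetP[y yC ->] xy u v].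
    by apply/is_compP; exists x => //; apply: (subsetP C_sub).
  rewrite !acyclic_scc ?(subsetP C_sub) // !inE => /eqP -> /eqP ->.
  apply/negP => x_y; apply: no_reach; exists x, y; split=> //.
  by apply: contraNneq xy => ->.
move=> x y xC yC; rewrite !acyclic_scc ?(subsetP C_sub) //; exact: set1_inj.
Qed.

Lemma acyclic_M_or_L M a0 ps : max_antichain d W sigma M ->
  L_choice d W sigma k a0 ps -> (k <= #|M|)%N \/ size ps = (2 * k).-1.
Proof.
move=> maxM L_ps.
have [[x [y [xC yC xy x_y]]] | no_reach] :=
  pselect (exists x y, [/\ x \in C, y \in C, x != y & reach x y]).
  by right; apply: acyclic_reach_L_size x_y L_ps.
by left; apply: acyclic_antichain_size.
Qed.

End Acyclic.

Lemma I_choice_spec I : I_choice d W sigma k I ->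
  (k <= #|I|)%N /\ separated d sigma I \/
  (k < #|I|)%N /\ exists a b, separated_but d sigma I a b.
Proof.
case=> M [a0 [ps [copt [maxM L_ps copt_none copt_some]]]] /=.
have [[antiM _] [shortest_ps _]] := (maxM, L_ps).
have long_cycle c : copt = Some c -> ((2 * k).+2 <= size c)%N.
  by case/copt_some => dc _; apply: dcycle_size_gt dc.
have M_or_L : ~ (exists c, [/\ copt = Some c, ((2 * #|M|).-1 <= size c)%N
                                               & ((size ps).+1 <= size c)%N]) ->
    (k <= #|M|)%N \/ (2 * k <= (size ps).+1)%N.
  case E : copt => [c|] not_useC.
    have c_long := long_cycle c E.
    have [le_Mc | lt_cM] := leqP (2 * #|M|).-1 (size c); last by left; lia.
    right; have [le_Lc | ] := leqP (size ps).+1 (size c); last lia.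
    by case: not_useC; exists c; split.
  have acyclic : ~ exists x q, closed_walk x q.
    by case/dcycle_chordless_exists => c [dc _]; apply: (copt_none.1 E); exists c.
  by case: (acyclic_M_or_L acyclic maxM L_ps) => [|->]; [left | right; lia].
have [x0 _] : exists x0, x0 \in C by apply/card_gt0P; rewrite card_C; lia.
case=> [[c [ec _ _ ->]] | [[not_useC le_LM I_rep] | [not_useC lt_ML I_rep]]].
- right; have [dc cc] := copt_some c ec.
  have [card_I sep_I] := odd_index_cycle_spec x0 dc cc.
  split; last by exists (nth x0 c (size c).-1), (nth x0 c 0).
  by rewrite card_I; apply: leq_uphalf; have c_long := long_cycle c ec; lia.
- left; have [sep_I le_MI] := antichain_representatives_spec antiM I_rep.
  split=> //; apply: leq_trans le_MI; case: (M_or_L not_useC) => // bound.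
  (* [set] merges differently elaborated copies of [#|M|] into one atom. *)
  by set m := #|M| in le_LM *; lia.
- left; have [sep_I le_I] := path_representatives_spec shortest_ps I_rep.
  split=> //; apply: leq_trans le_I; apply: leq_uphalf.
  by case: (M_or_L not_useC) => bound; set m := #|M| in bound lt_ML *; lia.
Qed.

Lemma extract_res_spec o : extract_res d W sigma k o ->
  exists S : {set T}, [/\ o = Some S, #|S| = k & sigma <= div d S].
Proof.
case=> I [/I_choice_spec I_spec].
have le_kI : (k <= #|I|)%N by case: I_spec => -[] // /ltnW.
rewrite le_kI => -[s [greedy_s ->]]; exists [set x in s].
split=> //; first exact: card_greedy greedy_s.
apply: separated_div; first by rewrite (card_greedy greedy_s).
case: I_spec => [[_ sep_I] | [lt_kI [a [b sep_I]]]].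
  move=> x y; rewrite !inE => /(greedy_subset greedy_s) xI /(greedy_subset greedy_s).
  exact: sep_I.
exact: greedy_separated_but greedy_s lt_kI sep_I.
Qed.

End ExtractCorrect.

Section ExtractExists.
Variables (R : realFieldType) (T : finType) (d : T -> T -> R).
Variables (W : {set T}) (sigma : R) (k : nat).

Local Notation scc := (Defs.scc d W sigma).
Local Notation shortest := (Defs.shortest_gc_path d W sigma).
Local Notation dcycle := (Defs.dcycle d W sigma).
Local Notation chordless := (Defs.chordless d W sigma).

Lemma max_antichain_exists : exists M, max_antichain d W sigma M.
Proof.
pose P n := exists M, antichain d W sigma M /\ #|M| = n.
have P0 : P 0%N by exists set0; split; [split=> A; rewrite inE | exact: cards0].
have P_bound n : P n -> (n <= #|{: {set T}}|)%N by case=> M [_ <-]; apply: max_card.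
have [_ [[M [antiM <-]] maxM]] := exists_maxn P_bound P0.
by exists M; split=> // M' antiM'; apply: maxM; exists M'.
Qed.

Lemma L_choice_exists x0 : x0 \in W -> exists a0 ps, L_choice d W sigma k a0 ps.
Proof.
move=> x0W; pose P n := exists b0 qs, shortest b0 qs /\ size qs = n.
have [[b0 [qs [shortest_qs size_qs]]] | no_2k] := pselect (P (2 * k).-1).
  by exists b0, qs; split=> //; left.
have P0 : P 0%N.
  exists (scc x0), [::]; split=> //; split=> //.
  by rewrite /Defs.gc_path andbT; apply/is_compP; exists x0.
have P_bound n : P n -> (n <= #|{: {set T}}|)%N.
  by case=> b0 [qs [/shortest_gc_path_size lt_qs <-]]; apply: ltnW.
have [_ [[b0 [qs [shortest_qs <-]]] maxqs]] := exists_maxn P_bound P0.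
exists b0, qs; split=> //; right; split=> [b1 qs' shortest' size'|b1 qs' shortest'].
  by apply: no_2k; exists b1, qs'.
by apply: maxqs; exists b1, qs'.
Qed.

Lemma cycle_choice_exists : exists copt : option (seq T),
  (copt = None <-> ~ exists c, dcycle c) /\
  (forall c, copt = Some c -> dcycle c /\ chordless c).
Proof.
have [[c0 /dcycle_closed_walk cyc] | no_cyc] := pselect (exists c, dcycle c); last first.
  by exists None.
have [c [dc cc]] := dcycle_chordless_exists cyc.
exists (Some c); split; last by move=> _ [<-].
by split=> // no_cycle; case: no_cycle; exists c.
Qed.

Lemma I_choice_exists x0 : x0 \in W -> exists I, I_choice d W sigma k I.
Proof.
move=> x0W; have [M maxM] := max_antichain_exists.
have [a0 [ps L_ps]] := L_choice_exists x0W.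
have [copt [copt_none copt_some]] := cycle_choice_exists.
have [[antiM _] [[gp _] _]] := (maxM, L_ps).
have [[c [ec le_Mc le_Lc]] | not_useC] := pselect (exists c, [/\ copt = Some c,
    ((2 * #|M|).-1 <= size c)%N & ((size ps).+1 <= size c)%N]).
  by exists [set x in odd_index c], M, a0, ps, copt; split=> //; left; exists c.
have [le_LM | lt_ML] := leqP (size ps).+1 (2 * #|M|).-1.
  have [I I_rep] : exists I, one_point_each (enum M) I.
    apply: (one_point_each_exists (antichain_disjoint antiM)) => A.
    by rewrite mem_enum => /antiM.1; apply: comp_neq0.
  by exists I, M, a0, ps, copt; split=> //; right; left.
have [I I_rep] : exists I, one_point_each (odd_index (a0 :: ps)) I.
  apply: one_point_each_exists => [A B x /odd_index_subset AF /odd_index_subset BF | A].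
    by apply: comp_eq; apply: gc_path_comp gp _.
  by move/odd_index_subset/(gc_path_comp gp); apply: comp_neq0.
by exists I, M, a0, ps, copt; split=> //; right; right.
Qed.

Lemma extract_res_exists x0 : x0 \in W -> exists o, extract_res d W sigma k o.
Proof.
move=> /I_choice_exists[I I_ch]; case le_kI: (k <= #|I|)%N.
  have [s greedy_s] := greedy_exists d le_kI.
  by exists (Some [set x in s]), I; split=> //; rewrite le_kI; exists s.
by exists None, I; split=> //; rewrite le_kI.
Qed.

End ExtractExists.

Lemma extract_res_card (R : realFieldType) (T : finType) (d : T -> T -> R) W sigma k S :
  extract_res d W sigma k (Some S) -> #|S| = k.
Proof.
by case=> I [_]; case: ifP => // _ [s [greedy_s [->]]]; apply: card_greedy greedy_s.
Qed.

Section BAC.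
Variables (R : realFieldType) (T : finType) (d : T -> T -> R).
Hypothesis d_refl : forall u, d u u = 0.
Hypothesis tri : forall u v w, d u v <= d u w + d w v.

Lemma bac_res_exists k (x0 : T) : exists o, bac_res d k o.
Proof.
have [Uc Uc_spec] : {Uc : R -> {set T} & forall r, 0 < r -> cluster_out d r (Uc r)}.
  apply: (@choice _ _ (fun r U => 0 < r -> cluster_out d r U)) => r.
  have [r_gt0 | r_le0] := pselect (0 < r); last by exists set0 => /r_le0.
  by have [U' run] := cluster_run_exists d_refl set0 r_gt0; exists U'.
have [out out_spec] : {out : R -> option {set T} &
    forall r, 0 < r -> extract_res d (Uc r) (r / (2 * k)%N%:R) k (out r)}.
  apply: (@choice _ _ (fun r o => 0 < r -> extract_res d (Uc r) (r / (2 * k)%N%:R) k o)) => r.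
  have [r_gt0 | r_le0] := pselect (0 < r); last by exists None => /r_le0.
  have [c cU _] := cluster_out_cover x0 (Uc_spec r r_gt0).
  by have [o ext] := extract_res_exists d (r / (2 * k)%N%:R) k cU; exists o.
have run_spec i j : i != j -> 0 < d i j ->
    cluster_out d (d i j) (Uc (d i j)) /\
    extract_res d (Uc (d i j)) (d i j / (2 * k)%N%:R) k (out (d i j)).
  by move=> _ dij_gt0; split; [apply: Uc_spec | apply: out_spec].
have [all_none | some_out] :=
  pselect (forall i j, i != j -> 0 < d i j -> out (d i j) = None).
  by exists None, Uc, out; split; first exact: run_spec.
pose P (p : T * T) := [/\ p.1 != p.2, 0 < d p.1 p.2 & out (d p.1 p.2) != None].
have [p0 P_p0] : exists p, P p.
  apply: contrapT => no_p; apply: some_out => i j ij dij_gt0.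
  by apply/eqP/negPn/negP => out_ij; apply: no_p; exists (i, j).
have [[i j] [[/= ij dij_gt0 out_ne] best]] :=
  exists_arg_max (P := P) (fun p => div d (odflt set0 (out (d p.1 p.2)))) P_p0.
case out_ij: (out (d i j)) out_ne => [S|] // _.
exists (Some S), Uc, out; split; first exact: run_spec.
  by split=> // /(_ i j ij dij_gt0); rewrite out_ij.
move=> _ [<-]; exists i, j; split=> // i' j' S' i'j' d'_gt0 out'.
by have := best (i', j'); rewrite /= out' out_ij; apply; split; rewrite ?out'.
Qed.

Lemma cluster_centers_separated (Rs Rb : R) (O U' : {set T}) :
  0 < Rs -> separated d Rs O ->
  (forall x y, x != y -> Rs / 3 <= d x y -> Rb <= d x y) ->
  cluster_out d Rb U' ->
  exists C : {set T}, [/\ C \subset U', #|C| = #|O| & separated d Rb C].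
Proof.
move=> Rs_gt0 sep_O Rb_min cl.
have near_lt c v : dmax d c v < Rb -> dmax d c v < Rs / 3.
  move=> lt_cv; rewrite ltNge; apply/negP => le_cv.
  have [eq_cv | cv] := eqVneq c v.
    by move: le_cv; rewrite eq_cv (dmaxxx d_refl) => ?; lra.
  move: le_cv; rewrite [dmax _ _ _]/dmax le_max => /orP[] le_d.
    by have := Rb_min _ _ cv le_d; have := le_dmaxl d c v => ? ?; lra.
  have vc : v != c by rewrite eq_sym.
  by have := Rb_min _ _ vc le_d; have := le_dmaxr d c v => ? ?; lra.
have [cen cen_spec] : {cen : T -> T & forall v, cen v \in U' /\ dmax d (cen v) v < Rb}.
  apply: (@choice _ _ (fun v c => c \in U' /\ dmax d c v < Rb)) => v.
  by have [c cU cv] := cluster_out_cover v cl; exists c.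
have near v : d v (cen v) < Rs / 3 /\ d (cen v) v < Rs / 3.
  have lt_v := near_lt _ _ (cen_spec v).2.
  by split; apply: le_lt_trans lt_v; [apply: le_dmaxr | apply: le_dmaxl].
have cen_inj : {in O &, injective cen}.
  move=> x y xO yO cen_xy; apply/eqP/negPn/negP => xy.
  have [dx _] := near x; have [_ dy] := near y; rewrite cen_xy in dx.
  by have := sep_O x y xO yO xy; have := tri x y (cen y) => ? ?; lra.
exists (cen @: O); split; last 1 first.
- move=> _ _ /imsetP[v1 v1O ->] /imsetP[v2 v2O ->] c12.
  have v12 : v1 != v2 by apply: contraNneq c12 => ->.
  apply: Rb_min => //; have := sep_O v1 v2 v1O v2O v12.
  have [d1 _] := near v1; have [_ d2] := near v2.
  by have := tri v1 v2 (cen v1); have := tri (cen v1) v2 (cen v2) => ? ? ?; lra.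
- by apply/subsetP => _ /imsetP[v _ ->]; apply: (cen_spec v).1.
- exact: card_in_imset.
Qed.

Lemma exists_threshold (Rs : R) (O : {set T}) :
  0 < Rs -> (1 < #|O|)%N -> separated d Rs O ->
  exists i j, [/\ i != j, Rs / 3 <= d i j &
    forall x y, x != y -> Rs / 3 <= d x y -> d i j <= d x y].
Proof.
move=> Rs_gt0 /card_gt1P[o1 [o2 [o1O o2O o12]]] sep_O.
have Rs_o12 : Rs / 3 <= d o1 o2 by have := sep_O o1 o2 o1O o2O o12 => ?; lra.
have [[i j] [[/= ij Rs_ij] min_ij]] :=
  exists_arg_min (P := fun p : T * T => p.1 != p.2 /\ Rs / 3 <= d p.1 p.2)
    (fun p => d p.1 p.2) (conj o12 Rs_o12 : _ (o1, o2)).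
by exists i, j; split=> // x y xy Rs_xy; apply: (min_ij (x, y)).
Qed.

Lemma bac_res_spec k o : (1 < k)%N -> 0 < ammd_opt d k -> bac_res d k o ->
  exists S : {set T}, [/\ o = Some S, #|S| = k & ammd_opt d k / (6 * k)%N%:R <= div d S].
Proof.
move=> k_gt1 Rs_gt0 [Uc [out [run_spec none_spec best_spec]]].
have [O [card_O div_O]] := ammd_opt_attained Rs_gt0.
set Rs := ammd_opt d k in Rs_gt0 div_O *.
have sep_O : separated d Rs O by move=> x y xO yO xy; rewrite -div_O div_le_dist.
have [|i0 [j0 [ij0 Rb_ge Rb_min]]] := exists_threshold Rs_gt0 _ sep_O.
  by rewrite card_O.
set Rb := d i0 j0 in Rb_ge Rb_min *.
have Rb_gt0 : 0 < Rb by lra.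
have [cl ext] := run_spec i0 j0 ij0 Rb_gt0.
have [C [C_sub card_C sep_C]] := cluster_centers_separated Rs_gt0 sep_O Rb_min cl.
pose sigma := Rb / (2 * k)%N%:R.
have k2_gt0 : 0 < (2 * k)%N%:R :> R by rewrite ltr0n; lia.
have Rb_eq : (2 * k)%N%:R * sigma = Rb by rewrite /sigma mulrC divfK // gt_eqF.
have W_sep x y : x \in Uc Rb -> y \in Uc Rb -> x != y -> (2 * k)%N%:R * sigma <= dmax d x y.
  by rewrite Rb_eq; apply: cluster_out_sep cl.
rewrite -Rb_eq card_O in sep_C card_C.
have [S0 [out0 _ div_S0]] :=
  extract_res_spec tri (divr_gt0 Rb_gt0 k2_gt0) k_gt1 W_sep C_sub card_C sep_C ext.
case eo: o => [S|]; last by have := none_spec.1 eo i0 j0 ij0 Rb_gt0; rewrite out0.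
have [i [j [ij dij_gt0 out_ij best]]] := best_spec S eo.
exists S; split=> //.
  by have := (run_spec i j ij dij_gt0).2; rewrite out_ij => /extract_res_card.
apply: le_trans (best i0 j0 S0 ij0 Rb_gt0 out0); apply: le_trans div_S0.
have -> : (6 * k)%N%:R = 3 * (2 * k)%N%:R :> R by rewrite -natrM mulnA.
rewrite /sigma invfM mulrA.
by apply: ler_wpM2r; [rewrite invr_ge0 ltW | lra].
Qed.

End BAC.

Theorem theorem5p5 (R : realFieldType) (T : finType) (d : T -> T -> R) (k : nat) :
  asym_pseudometric d ->
  (2 <= k <= #|T|)%N ->
  0 < ammd_opt d k ->
  (exists o, bac_res d k o) /\
  forall o, bac_res d k o ->
    exists S : {set T}, [/\ o = Some S, #|S| = k &
      ammd_opt d k / (6 * k)%N%:R <= div d S].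
Proof.
case=> _ d_refl tri /andP[k_gt1 le_kT] Rs_gt0; split=> [|o bac_o].
  have /card_gt0P[x0 _] : (0 < #|T|)%N by apply: leq_trans le_kT; apply: ltnW.
  exact: bac_res_exists d_refl k x0.
exact (bac_res_spec d_refl tri k_gt1 Rs_gt0 bac_o).
Qed.
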